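(* Let $k\in\mathbb{N}$ and let $\psi$ be a complex-valued function on $T$. The following are equivalent: (a) $M_\psi$ is bounded on $\mathcal{L}^{(k)}$; (b) $M_\psi$ is bounded on $\mathcal{L}^{(k)}_0$; (c) $\psi\in L^\infty\cap \mathcal{L}^{(k+1)}$. Furthermore, under these conditions, the operator norm $\|M_\psi\|$ satisfies $$\max\{\|\psi\|_\infty,\|\psi\|_k\}\le \|M_\psi\|\le \|\psi\|_\infty+\sup_{v\in T^*}|v|\prod_{j=1}^{k}\ell_j(|v|)\,D\psi(v).$$
   Context: $T$ is a tree (locally finite, connected, simply connected graph, identified with its vertex set) without terminal vertices, rooted at a vertex $o$. For $v\in T$, $|v|$ is the number of edges of the path from $o$ to $v$; for $v\ne o$, $v^-$ denotes the neighbor of $v$ on the path from $o$ to $v$ (the parent of $v$). $T^*=T\setminus\{o\}$. For a function $f:T\to\mathbb{C}$ and $v\in T^*$, $Df(v)=|f(v)-f(v^-)|$. For $x\ge1$ define $\ell_0(x)=1$, $\ell_1(x)=1+\ln x$, and $\ell_j(x)=1+\ln\ell_{j-1}(x)$ for $j\ge2$. For $k\in\mathbb{N}$, $\mathcal{L}^{(k)}$ is the set of $f:T\to\mathbb{C}$ with $\sup_{v\in T^*}|v|\prod_{j=0}^{k-1}\ell_j(|v|)Df(v)<\infty$, with norm $\|f\|_k=|f(o)|+\sup_{v\in T^*}|v|\prod_{j=0}^{k-1}\ell_j(|v|)Df(v)$. $\mathcal{L}^{(k)}_0$ is the subspace of $f\in\mathcal{L}^{(k)}$ with $\lim_{|v|\to\infty}|v|\prod_{j=0}^{k-1}\ell_j(|v|)Df(v)=0$.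 $L^\infty$ is the space of bounded functions on $T$ with $\|f\|_\infty=\sup_{v\in T}|f(v)|$. $M_\psi f=\psi f$ is the multiplication operator with symbol $\psi$; $\|M_\psi\|$ denotes its operator norm on the space ($\mathcal{L}^{(k)}$ or $\mathcal{L}^{(k)}_0$) on which it acts. *)

From Stdlib Require Import Reals List ClassicalEpsilon.
From Coquelicot Require Import Coquelicot.
Open Scope R_scope.

(* A rooted tree is encoded by its vertex type V, its root o, and the parent
   map par (v^- = par v for v <> o; par o = o is a dummy value).
   Every vertex reaches the root by iterating par; the graph with edges
   {v, par v} (v <> o) is then connected and acyclic, i.e. a tree. *)
Definition child {V : Type} (o : V) (par : V -> V) (v w : V) : Prop :=
  w <> o /\ par w = v.

Definition rooted_tree {V : Type} (o : V) (par : V -> V) : Prop :=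
  par o = o /\
  (forall v : V, exists n : nat, Nat.iter n par v = o) /\
  (forall v : V, exists l : list V, forall w, child o par v w -> In w l) /\
  (* no terminal vertices: every vertex has at least two neighbours *)
  (exists a b : V, a <> b /\ child o par o a /\ child o par o b) /\
  (forall v : V, v <> o -> exists w, child o par v w).

Section TreeSpaces.
Context {V : Type} (o : V) (par : V -> V).

Definition is_depth (v : V) (n : nat) : Prop :=
  Nat.iter n par v = o /\ forall m, (m < n)%nat -> Nat.iter m par v <> o.

Definition depth (v : V) : nat := epsilon (inhabits 0%nat) (is_depth v).

Fixpoint ell (j : nat) (x : R) : R :=
  match j with
  | O => 1
  | S O => 1 + ln x
  | S j' => 1 + ln (ell j' x)
  end.

Fixpoint prodl (a n : nat) (x : R) : R :=
  match n with
  | O => 1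
  | S n' => prodl a n' x * ell (a + n') x
  end.

Definition Dop (f : V -> C) (v : V) : R := Cmod (Cminus (f v) (f (par v))).

Definition wD (k : nat) (f : V -> C) (v : V) : R :=
  INR (depth v) * prodl 0 k (INR (depth v)) * Dop f v.

Definition Lk (k : nat) (f : V -> C) : Prop :=
  exists M : R, forall v, v <> o -> wD k f v <= M.

Definition Lk0 (k : nat) (f : V -> C) : Prop :=
  Lk k f /\
  forall eps : R, 0 < eps -> exists N : nat,
    forall v, v <> o -> (N <= depth v)%nat -> Rabs (wD k f v) < eps.

Definition normk (k : nat) (f : V -> C) : Rbar :=
  Rbar_plus (Finite (Cmod (f o)))
    (Lub_Rbar (fun r => exists v, v <> o /\ r = wD k f v)).

Definition Linf (f : V -> C) : Prop := exists M : R, forall v, Cmod (f v) <= M.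

Definition supnorm (f : V -> C) : Rbar := Lub_Rbar (fun r => exists v, r = Cmod (f v)).

Definition upper_sup (k : nat) (psi : V -> C) : Rbar :=
  Lub_Rbar (fun r => exists v, v <> o /\
     r = INR (depth v) * prodl 1 k (INR (depth v)) * Dop psi v).

Definition Mop (psi f : V -> C) : V -> C := fun v => Cmult (psi v) (f v).

Definition bounded_on (X : (V -> C) -> Prop) (nrm : (V -> C) -> Rbar)
  (psi : V -> C) : Prop :=
  (forall f, X f -> X (Mop psi f)) /\
  exists Cst : R, 0 <= Cst /\
    forall f, X f -> Rbar_le (nrm (Mop psi f)) (Rbar_mult (Finite Cst) (nrm f)).

Definition opnorm (X : (V -> C) -> Prop) (nrm : (V -> C) -> Rbar)
  (psi : V -> C) : Rbar :=
  Lub_Rbar (fun r => exists f, X f /\ Rbar_le (nrm f) (Finite 1) /\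
                                 Finite r = nrm (Mop psi f)).

Definition opnorm_estimate (X : (V -> C) -> Prop) (k : nat) (psi : V -> C) : Prop :=
  Rbar_le (supnorm psi) (opnorm X (normk k) psi) /\
  Rbar_le (normk k psi) (opnorm X (normk k) psi) /\
  Rbar_le (opnorm X (normk k) psi) (Rbar_plus (supnorm psi) (upper_sup k psi)).

End TreeSpaces.

(* For f in L^(k) the increment of f at depth m is at most ||f||_k / (m prod_{j<k} ell_j(m)),
   and these bounds sum to at most ell_k(n) ([harm_le_ell]): |f(v)| <= ||f||_k ell_k(|v|).
   Together with the product rule D(psi f)(v) <= |psi(v)| Df(v) + |f(v^-)| Dpsi(v) this gives
   the sufficiency of psi in L^inf and L^(k+1), and the upper bound on ||M_psi||; on L^(k)_0 the
   decay of Df eventually beats the constant part of the growth of f.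
   Conversely, |psi(w)|^n = |(M_psi^n 1)(w)| <= C_w ||M_psi||^n forces |psi| <= ||M_psi||, and
   testing M_psi on truncations of a function of maximal growth ell_k puts psi in L^(k+1). *)

From Stdlib Require Import Reals Lra Lia Wf_nat Classical ClassicalEpsilon FunctionalExtensionality.
From Coquelicot Require Import Coquelicot.
Open Scope R_scope.

Lemma ln_le_sub1 x : 0 < x -> ln x <= x - 1.
Proof. intros Hx. pose proof (exp_ineq1_le (ln x)) as H. rewrite exp_ln in H; lra. Qed.

Lemma ln_sub_le x y : 0 < x -> 0 < y -> ln y - ln x <= (y - x) / x.
Proof.
  intros Hx Hy. rewrite <- ln_div by lra.
  replace ((y - x) / x) with (y / x - 1) by (field; lra).
  apply ln_le_sub1, Rdiv_lt_0_compat; lra.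
Qed.

Lemma ln_sub_ge x y : 0 < x -> 0 < y -> (y - x) / y <= ln y - ln x.
Proof.
  intros Hx Hy. pose proof (ln_sub_le y x Hy Hx).
  replace ((y - x) / y) with (- ((x - y) / y)) by (field; lra). lra.
Qed.

Lemma ell_SS j x : ell (S (S j)) x = 1 + ln (ell (S j) x).
Proof. reflexivity. Qed.

Lemma ell_ge1 j x : 1 <= x -> 1 <= ell j x.
Proof.
  intros Hx. destruct j as [|j]; [simpl; lra|].
  assert (ln_ge0 : forall y, 1 <= y -> 0 <= ln y)
    by (intros y Hy; rewrite <- ln_1; apply ln_le; lra).
  induction j as [|j IH].
  - simpl. pose proof (ln_ge0 x Hx). lra.
  - rewrite ell_SS. pose proof (ln_ge0 _ IH). lra.
Qed.

Lemma INR_S_ge1 n : 1 <= INR (S n).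
Proof. apply (le_INR 1). lia. Qed.

Lemma ell_1 j : ell j 1 = 1.
Proof.
  destruct j as [|j]; [reflexivity|].
  induction j as [|j IH]; [simpl | rewrite ell_SS, IH]; rewrite ln_1; lra.
Qed.

Lemma prodl_ge1 a m x : 1 <= x -> 1 <= prodl a m x.
Proof.
  intros Hx. induction m as [|m IH]; simpl; [lra|].
  pose proof (ell_ge1 (a + m) x Hx). nra.
Qed.

Lemma prodl_1 a m : prodl a m 1 = 1.
Proof. induction m as [|m IH]; simpl; [|rewrite IH, ell_1]; lra. Qed.

Lemma prodl_0_S m x : prodl 0 (S m) x = prodl 1 m x.
Proof.
  induction m as [|m IH]; [simpl; lra|].
  change (prodl 0 (S (S m)) x) with (prodl 0 (S m) x * ell (S m) x).
  rewrite IH. reflexivity.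
Qed.

(* Discrete forms of [ell (S k)]' x = 1 / (x * prodl 0 (S k) x), a decreasing function. *)
Lemma ell_sub_ge k x y : 1 <= x <= y ->
  (y - x) / (y * prodl 0 (S k) y) <= ell (S k) y - ell (S k) x.
Proof.
  intros Hxy. induction k as [|k IH].
  - simpl. replace (y * (1 * 1)) with y by ring.
    pose proof (ln_sub_ge x y). lra.
  - rewrite !ell_SS.
    change (prodl 0 (S (S k)) y) with (prodl 0 (S k) y * ell (S k) y).
    pose proof (ell_ge1 (S k) x ltac:(lra)). pose proof (ell_ge1 (S k) y ltac:(lra)).
    pose proof (prodl_ge1 0 (S k) y ltac:(lra)).
    pose proof (ln_sub_ge (ell (S k) x) (ell (S k) y) ltac:(lra) ltac:(lra)).
    replace ((y - x) / (y * (prodl 0 (S k) y * ell (S k) y)))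
      with ((y - x) / (y * prodl 0 (S k) y) / ell (S k) y) by (field; nra).
    enough ((y - x) / (y * prodl 0 (S k) y) / ell (S k) y
            <= (ell (S k) y - ell (S k) x) / ell (S k) y) by lra.
    apply Rmult_le_compat_r; [apply Rlt_le, Rinv_0_lt_compat; lra | exact IH].
Qed.

Lemma ell_sub_le k x y : 1 <= x <= y ->
  ell (S k) y - ell (S k) x <= (y - x) / (x * prodl 0 (S k) x).
Proof.
  intros Hxy. induction k as [|k IH].
  - simpl. replace (x * (1 * 1)) with x by ring.
    pose proof (ln_sub_le x y). lra.
  - rewrite !ell_SS.
    change (prodl 0 (S (S k)) x) with (prodl 0 (S k) x * ell (S k) x).
    pose proof (ell_ge1 (S k) x ltac:(lra)). pose proof (ell_ge1 (S k) y ltac:(lra)).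
    pose proof (prodl_ge1 0 (S k) x ltac:(lra)).
    pose proof (ln_sub_le (ell (S k) x) (ell (S k) y) ltac:(lra) ltac:(lra)).
    replace ((y - x) / (x * (prodl 0 (S k) x * ell (S k) x)))
      with ((y - x) / (x * prodl 0 (S k) x) / ell (S k) x) by (field; nra).
    enough ((ell (S k) y - ell (S k) x) / ell (S k) x
            <= (y - x) / (x * prodl 0 (S k) x) / ell (S k) x) by lra.
    apply Rmult_le_compat_r; [apply Rlt_le, Rinv_0_lt_compat; lra | exact IH].
Qed.

Lemma ell_unbounded k B : exists N : nat, forall n, (N <= n)%nat -> B <= ell (S k) (INR n).
Proof.
  induction k as [|k IH] in B |- *.
  - destruct (INR_unbounded (exp (B - 1))) as [N HN]. exists N. intros n Hn.
    apply le_INR in Hn. pose proof (exp_pos (B - 1)).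
    pose proof (ln_le (exp (B - 1)) (INR n) ltac:(lra) ltac:(lra)).
    rewrite ln_exp in *. simpl. lra.
  - destruct (IH (exp (B - 1))) as [N HN]. exists N. intros n Hn.
    pose proof (ln_le _ _ (exp_pos (B - 1)) (HN n Hn)).
    rewrite ln_exp in *. rewrite ell_SS. lra.
Qed.

Fixpoint harm (k n : nat) : R :=
  match n with
  | O => 0
  | S m => harm k m + / (INR (S m) * prodl 0 k (INR (S m)))
  end.

Lemma harm_S k n : harm k (S n) = harm k n + / (INR (S n) * prodl 0 k (INR (S n))).
Proof. reflexivity. Qed.

Lemma harm_step_pos k n : 0 < / (INR (S n) * prodl 0 k (INR (S n))).
Proof.
  pose proof (INR_S_ge1 n). pose proof (prodl_ge1 0 k (INR (S n)) (INR_S_ge1 n)).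
  apply Rinv_0_lt_compat. nra.
Qed.

Lemma harm_le_S k n : harm k n <= harm k (S n).
Proof. rewrite harm_S. pose proof (harm_step_pos k n). lra. Qed.

Lemma harm_nonneg k n : 0 <= harm k n.
Proof. induction n as [|n IH]; [simpl; lra|]. pose proof (harm_le_S k n). lra. Qed.

Lemma harm_le_ell k n : (1 <= n)%nat -> harm (S k) n <= ell (S k) (INR n).
Proof.
  induction n as [|n IH]; intros Hn; [lia|].
  destruct (Nat.eq_dec n 0) as [->|Hn0].
  - rewrite harm_S. change (harm (S k) 0) with 0. change (INR 1) with 1.
    rewrite prodl_1, ell_1. lra.
  - assert (1 <= INR n) by (apply (le_INR 1); lia).
    pose proof (ell_sub_ge k (INR n) (INR n + 1) ltac:(lra)) as Hinc.
    replace (INR n + 1 - INR n) with 1 in Hinc by ring.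
    rewrite harm_S, S_INR. specialize (IH ltac:(lia)). unfold Rdiv in Hinc. lra.
Qed.

Lemma ell_S_le_harm k n : ell (S k) (INR (S n)) <= 1 + harm (S k) n.
Proof.
  induction n as [|n IH].
  - change (harm (S k) 0) with 0. change (INR 1) with 1. rewrite ell_1. lra.
  - pose proof (INR_S_ge1 n).
    pose proof (ell_sub_le k (INR (S n)) (INR (S n) + 1) ltac:(lra)) as Hinc.
    replace (INR (S n) + 1 - INR (S n)) with 1 in Hinc by ring.
    rewrite (S_INR (S n)), harm_S. unfold Rdiv in Hinc. lra.
Qed.

Lemma le_of_pow_le a L K : 0 <= a -> 0 <= L -> (forall n, a ^ n <= K * L ^ n) -> a <= L.
Proof.
  intros Ha HL Hpow. apply Rnot_lt_le. intros HLa.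
  destruct (Req_dec L 0) as [->|HL0].
  { specialize (Hpow 1%nat). simpl in Hpow. lra. }
  set (q := (a - L) / L).
  assert (Hq : 0 < q) by (apply Rdiv_lt_0_compat; lra).
  destruct (INR_unbounded (K / q)) as [n Hn].
  specialize (Hpow n). pose proof (poly n q Hq) as Hbernoulli.
  replace a with (L * (1 + q)) in Hpow by (unfold q; field; lra).
  rewrite Rpow_mult_distr in Hpow.
  assert (0 < L ^ n) by (apply pow_lt; lra).
  assert ((1 + q) ^ n <= K) by nra.
  assert (K / q * q = K) by (field; lra).
  nra.
Qed.

Lemma Lub_Rbar_ub (E : R -> Prop) x : E x -> Rbar_le x (Lub_Rbar E).
Proof. exact (fun Hx => proj1 (Lub_Rbar_correct E) x Hx). Qed.

Lemma Lub_Rbar_least (E : R -> Prop) b :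
  (forall x, E x -> Rbar_le x b) -> Rbar_le (Lub_Rbar E) b.
Proof. exact (proj2 (Lub_Rbar_correct E) b). Qed.

Lemma Lub_Rbar_finite (E : R -> Prop) x M :
  E x -> (forall y, E y -> y <= M) -> Lub_Rbar E = Finite (real (Lub_Rbar E)).
Proof.
  intros Hx HM.
  pose proof (Lub_Rbar_ub E x Hx) as Hlo.
  pose proof (Lub_Rbar_least E M HM) as Hhi.
  destruct (Lub_Rbar E); simpl in *; easy.
Qed.

Lemma supnorm_Linf {V : Type} (psi : V -> C) (v0 : V) :
  Linf psi -> supnorm psi = Finite (real (supnorm psi)) /\ forall v, Cmod (psi v) <= real (supnorm psi).
Proof.
  intros [M HM].
  assert (Hfin : supnorm psi = Finite (real (supnorm psi))).
  { apply (Lub_Rbar_finite _ (Cmod (psi v0)) M); [eauto|]. intros y [v ->]. apply HM. }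
  split; [exact Hfin|]. intros v.
  pose proof (Lub_Rbar_ub (fun r => exists v, r = Cmod (psi v)) _ (ex_intro _ v eq_refl)) as H.
  fold (supnorm psi) in H. rewrite Hfin in H. exact H.
Qed.

Lemma Dop_Mop_le {V : Type} (par : V -> V) psi f v :
  Dop par (Mop psi f) v <= Cmod (psi v) * Dop par f v + Cmod (f (par v)) * Dop par psi v.
Proof.
  unfold Dop, Mop.
  replace (psi v * f v - psi (par v) * f (par v))%C
    with (psi v * (f v - f (par v)) + f (par v) * (psi v - psi (par v)))%C by ring.
  rewrite <- !Cmod_mult. apply Cmod_triangle.
Qed.

Lemma Dop_Mop_ge {V : Type} (par : V -> V) psi f v :
  Cmod (f (par v)) * Dop par psi v <= Dop par (Mop psi f) v + Cmod (psi v) * Dop par f v.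
Proof.
  unfold Dop, Mop. rewrite <- !Cmod_mult.
  replace (f (par v) * (psi v - psi (par v)))%C
    with ((psi v * f v - psi (par v) * f (par v)) + - (psi v * (f v - f (par v))))%C by ring.
  rewrite <- (Cmod_opp (psi v * (f v - f (par v)))). apply Cmod_triangle.
Qed.

Section Tree.
Context {V : Type} (o : V) (par : V -> V) (HT : rooted_tree o par).
Local Notation dep := (depth o par).

Lemma depth_spec v : is_depth o par v (dep v).
Proof.
  unfold depth. apply epsilon_spec. destruct HT as [_ [Hreach _]].
  destruct (dec_inh_nat_subset_has_unique_least_element
              (fun n => Nat.iter n par v = o) (fun n => classic _) (Hreach v))
    as [n [[Hn Hleast] _]].
  exists n. split; [exact Hn|]. intros m Hm Hmo. specialize (Hleast m Hmo). lia.
Qed.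

Lemma depth_o : dep o = 0%nat.
Proof.
  destruct (depth_spec o) as [_ Hmin].
  destruct (dep o) as [|n]; [reflexivity|]. exfalso. apply (Hmin 0%nat); [lia|reflexivity].
Qed.

Lemma depth_0 v : dep v = 0%nat -> v = o.
Proof. intros Hv. destruct (depth_spec v) as [Hit _]. rewrite Hv in Hit. exact Hit. Qed.

Lemma depth_par v : v <> o -> dep v = S (dep (par v)).
Proof.
  intros Hv. destruct (depth_spec v) as [Hv_o Hv_min], (depth_spec (par v)) as [Hp_o Hp_min].
  rewrite <- Nat.iter_succ_r in Hp_o.
  destruct (dep v) as [|n]; [contradiction|].
  rewrite Nat.iter_succ_r in Hv_o.
  assert (~ (n < dep (par v))%nat) by (intros Hlt; exact (Hp_min n Hlt Hv_o)).
  assert (~ (S (dep (par v)) < S n)%nat) by (intros Hlt; exact (Hv_min _ Hlt Hp_o)).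
  lia.
Qed.

Lemma depth_ge1 v : v <> o -> 1 <= INR (dep v).
Proof. intros Hv. rewrite (depth_par v Hv). apply INR_S_ge1. Qed.

Lemma nonroot_exists : exists a, a <> o.
Proof. destruct HT as [_ [_ [_ [[a [_ [_ [[Ha _] _]]]] _]]]]. eauto. Qed.

Lemma depth_ind_from (N : nat) (P : V -> Prop) :
  (forall w, dep w = N -> P w) ->
  (forall v, v <> o -> (N < dep v)%nat -> P (par v) -> P v) ->
  forall w, (N <= dep w)%nat -> P w.
Proof.
  intros Hbase Hstep.
  enough (H : forall j w, dep w = (N + j)%nat -> P w) by (intros w Hw; apply (H (dep w - N)%nat); lia).
  induction j as [|j IH]; intros w Hw; [apply Hbase; lia|].
  assert (Hwo : w <> o) by (intros ->; rewrite depth_o in Hw; lia).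
  apply Hstep; [exact Hwo | lia |]. apply IH. rewrite depth_par in Hw by exact Hwo. lia.
Qed.

Lemma weight_nonneg k n : 0 <= INR n * prodl 0 k (INR n).
Proof.
  destruct n as [|n]; [simpl; lra|].
  pose proof (INR_S_ge1 n). pose proof (prodl_ge1 0 k _ (INR_S_ge1 n)). nra.
Qed.

Lemma wD_nonneg k f v : 0 <= wD o par k f v.
Proof. apply Rmult_le_pos; [apply weight_nonneg | apply Cmod_ge_0]. Qed.

Lemma wD_S k f v : wD o par (S k) f v = wD o par k f v * ell k (INR (dep v)).
Proof. unfold wD. simpl prodl. ring. Qed.

Lemma wD_const k z v : wD o par k (fun _ => z) v = 0.
Proof. unfold wD, Dop. replace (z - z)%C with (RtoC 0) by ring. rewrite Cmod_0. ring. Qed.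

Lemma wD_Mop_le k psi f v :
  wD o par k (Mop psi f) v <= Cmod (psi v) * wD o par k f v + wD o par k psi v * Cmod (f (par v)).
Proof.
  unfold wD. pose proof (weight_nonneg k (dep v)).
  pose proof (Dop_Mop_le par psi f v). nra.
Qed.

Lemma wD_Mop_ge k psi f v :
  wD o par k psi v * Cmod (f (par v)) <= wD o par k (Mop psi f) v + Cmod (psi v) * wD o par k f v.
Proof.
  unfold wD. pose proof (weight_nonneg k (dep v)).
  pose proof (Dop_Mop_ge par psi f v). nra.
Qed.

Definition wsup k f : Rbar := Lub_Rbar (fun r => exists v, v <> o /\ r = wD o par k f v).

(* Junk value [0] when [f] is not in [Lk o par k]. *)
Definition wnorm k f : R := real (wsup k f).

Lemma wsup_Lk k f : Lk o par k f -> wsup k f = Finite (wnorm k f).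
Proof.
  intros [M HM]. destruct nonroot_exists as [a Ha].
  apply (Lub_Rbar_finite _ (wD o par k f a) M); [eauto|].
  intros y [v [Hv ->]]. auto.
Qed.

Lemma wD_le_wnorm k f v : Lk o par k f -> v <> o -> wD o par k f v <= wnorm k f.
Proof.
  intros Hf Hv. pose proof (Lub_Rbar_ub (fun r => exists v, v <> o /\ r = wD o par k f v)
                              (wD o par k f v) (ex_intro _ v (conj Hv eq_refl))) as H.
  fold (wsup k f) in H. rewrite wsup_Lk in H by exact Hf. exact H.
Qed.

Lemma wnorm_le k f M : (forall v, v <> o -> wD o par k f v <= M) -> wnorm k f <= M.
Proof.
  intros HM.
  assert (Hle : Rbar_le (wsup k f) M)
    by (apply Lub_Rbar_least; intros y [v [Hv ->]]; apply HM, Hv).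
  rewrite wsup_Lk in Hle by (exists M; exact HM). exact Hle.
Qed.

Lemma wnorm_nonneg k f : Lk o par k f -> 0 <= wnorm k f.
Proof.
  intros Hf. destruct nonroot_exists as [a Ha].
  pose proof (wD_nonneg k f a). pose proof (wD_le_wnorm k f a Hf Ha). lra.
Qed.

Lemma normk_Lk k f : Lk o par k f -> normk o par k f = Finite (Cmod (f o) + wnorm k f).
Proof. intros Hf. unfold normk. fold (wsup k f). rewrite wsup_Lk by exact Hf. reflexivity. Qed.

Lemma upper_sup_wsup k psi : upper_sup o par k psi = wsup (S k) psi.
Proof.
  apply Lub_Rbar_eqset. intros r.
  split; intros [v [Hv ->]]; exists v; (split; [exact Hv|]); unfold wD; rewrite prodl_0_S; reflexivity.
Qed.

Lemma Lk_const k z : Lk o par k (fun _ => z).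
Proof. exists 0. intros v _. rewrite wD_const. lra. Qed.

Lemma Lk0_const k z : Lk0 o par k (fun _ => z).
Proof.
  split; [apply Lk_const|]. intros eps Heps. exists 0%nat. intros v _ _.
  rewrite wD_const, Rabs_R0. exact Heps.
Qed.

Lemma normk_const k z : normk o par k (fun _ => z) = Finite (Cmod z).
Proof.
  rewrite normk_Lk by apply Lk_const.
  assert (wnorm k (fun _ => z) <= 0) by (apply wnorm_le; intros v _; rewrite wD_const; lra).
  pose proof (wnorm_nonneg k _ (Lk_const k z)). f_equal. lra.
Qed.

Lemma wD_scale k r f v : wD o par k (Mop (fun _ => RtoC r) f) v = Rabs r * wD o par k f v.
Proof.
  unfold wD, Dop, Mop. replace (r * f v - r * f (par v))%C with (r * (f v - f (par v)))%C by ring.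
  rewrite Cmod_mult, Cmod_R. ring.
Qed.

Lemma Lk_scale k r f : Lk o par k f -> Lk o par k (Mop (fun _ => RtoC r) f).
Proof.
  intros [M HM]. exists (Rabs r * M). intros v Hv. rewrite wD_scale.
  apply Rmult_le_compat_l; [apply Rabs_pos | apply HM, Hv].
Qed.

Lemma normk_scale k r f : 0 <= r -> Lk o par k f ->
  normk o par k (Mop (fun _ => RtoC r) f) = Rbar_mult r (normk o par k f).
Proof.
  intros Hr Hf. rewrite !normk_Lk by auto using Lk_scale. simpl. f_equal.
  unfold Mop at 1. rewrite Cmod_mult, Cmod_R, Rabs_pos_eq by exact Hr.
  enough (wnorm k (Mop (fun _ => RtoC r) f) = r * wnorm k f) by lra.
  apply Rle_antisym.
  - apply wnorm_le. intros v Hv. rewrite wD_scale, Rabs_pos_eq by exact Hr.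
    apply Rmult_le_compat_l; [exact Hr | apply wD_le_wnorm; assumption].
  - destruct (Req_dec r 0) as [->|Hr0].
    + rewrite Rmult_0_l. apply wnorm_nonneg, Lk_scale, Hf.
    + assert (Hle : wnorm k f <= wnorm k (Mop (fun _ => RtoC r) f) / r).
      { apply wnorm_le. intros v Hv. apply (Rle_div_r (wD o par k f v)); [lra|].
        rewrite Rmult_comm, <- (Rabs_pos_eq r Hr) at 1. rewrite <- wD_scale.
        apply wD_le_wnorm; [apply Lk_scale, Hf | exact Hv]. }
      apply Rle_div_r in Hle; lra.
Qed.

Lemma Cmod_le_harm k f N A e :
  (forall w, dep w = N -> Cmod (f w) <= A) ->
  (forall v, v <> o -> (N < dep v)%nat -> wD o par k f v <= e) ->
  forall w, (N <= dep w)%nat -> Cmod (f w) <= A + e * (harm k (dep w) - harm k N).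
Proof.
  intros HA He. apply depth_ind_from.
  - intros w Hw. rewrite Hw, Rminus_diag, Rmult_0_r, Rplus_0_r. apply HA, Hw.
  - intros v Hv HNv IH. specialize (He v Hv HNv). unfold wD in He.
    rewrite (depth_par v Hv) in He |- *. rewrite harm_S.
    pose proof (harm_step_pos k (dep (par v))) as Hpos.
    set (wgt := INR (S (dep (par v))) * prodl 0 k (INR (S (dep (par v))))) in *.
    assert (Hstep : Dop par f v <= e * / wgt).
    { apply Rinv_0_lt_compat in Hpos. rewrite Rinv_inv in Hpos.
      apply (Rmult_le_reg_l wgt); [exact Hpos|].
      replace (wgt * (e * / wgt)) with e by (field; lra). exact He. }
    assert (Cmod (f v) <= Cmod (f (par v)) + Dop par f v).
    { unfold Dop. replace (f v) with (f (par v) + (f v - f (par v)))%C at 1 by ring.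
      apply Cmod_triangle. }
    lra.
Qed.

Lemma Cmod_le_wnorm k f w : Lk o par k f -> Cmod (f w) <= Cmod (f o) + wnorm k f * harm k (dep w).
Proof.
  intros Hf.
  assert (Hroot : forall w', dep w' = 0%nat -> Cmod (f w') <= Cmod (f o))
    by (intros w' Hw'; rewrite (depth_0 w' Hw'); lra).
  pose proof (Cmod_le_harm k f 0 _ _ Hroot (fun v Hv _ => wD_le_wnorm k f v Hf Hv) w
                (Nat.le_0_l _)) as H.
  change (harm k 0) with 0 in H. lra.
Qed.

Lemma Cmod_le_normk k f c w :
  Lk o par k f -> Rbar_le (normk o par k f) (Finite c) -> Cmod (f w) <= (1 + harm k (dep w)) * c.
Proof.
  intros Hf Hc. rewrite normk_Lk in Hc by exact Hf. simpl in Hc.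
  pose proof (Cmod_le_wnorm k f w Hf). pose proof (wnorm_nonneg k f Hf).
  pose proof (harm_nonneg k (dep w)). pose proof (Cmod_ge_0 (f o)). nra.
Qed.

Lemma wD_le_normk k f c v :
  Lk o par k f -> v <> o -> Rbar_le (normk o par k f) (Finite c) -> wD o par k f v <= c.
Proof.
  intros Hf Hv Hc. rewrite normk_Lk in Hc by exact Hf. simpl in Hc.
  pose proof (wD_le_wnorm k f v Hf Hv). pose proof (Cmod_ge_0 (f o)). lra.
Qed.

Lemma Cmod_par_le_ell k f v : Lk o par (S k) f -> v <> o ->
  Cmod (f (par v)) <= (Cmod (f o) + wnorm (S k) f) * ell (S k) (INR (dep v)).
Proof.
  intros Hf Hv. pose proof (Cmod_le_wnorm (S k) f (par v) Hf).
  rewrite (depth_par v Hv) in *.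
  pose proof (harm_le_S (S k) (dep (par v))). pose proof (harm_le_ell k (S (dep (par v))) ltac:(lia)).
  pose proof (ell_ge1 (S k) _ (INR_S_ge1 (dep (par v)))).
  pose proof (wnorm_nonneg (S k) f Hf). pose proof (Cmod_ge_0 (f o)). nra.
Qed.

Lemma Lk0_tail k f e : Lk0 o par (S k) f -> 0 < e ->
  exists N A, 0 <= A /\ forall v, v <> o -> (N < dep v)%nat ->
    wD o par (S k) f v <= e /\ Cmod (f (par v)) <= A + e * ell (S k) (INR (dep v)).
Proof.
  intros [Hf Hf0] He. destruct (Hf0 e He) as [N HN].
  assert (HwD : forall v, v <> o -> (N <= dep v)%nat -> wD o par (S k) f v <= e).
  { intros v Hv Hd. specialize (HN v Hv Hd). rewrite Rabs_pos_eq in HN by apply wD_nonneg. lra. }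
  set (A := Cmod (f o) + wnorm (S k) f * harm (S k) N).
  exists N, A. split.
  { pose proof (wnorm_nonneg (S k) f Hf). pose proof (harm_nonneg (S k) N).
    pose proof (Cmod_ge_0 (f o)). unfold A. nra. }
  intros v Hv Hd. split; [apply HwD; [exact Hv | lia]|].
  assert (HA : forall w, dep w = N -> Cmod (f w) <= A)
    by (intros w Hw; unfold A; rewrite <- Hw; apply Cmod_le_wnorm, Hf).
  assert (HNpar : (N <= dep (par v))%nat) by (rewrite (depth_par v Hv) in Hd; lia).
  pose proof (Cmod_le_harm (S k) f N A e HA
                (fun w Hw Hlt => HwD w Hw (Nat.lt_le_incl _ _ Hlt)) (par v) HNpar).
  rewrite (depth_par v Hv).
  pose proof (harm_le_S (S k) (dep (par v))). pose proof (harm_le_ell k (S (dep (par v))) ltac:(lia)).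
  pose proof (harm_nonneg (S k) N). nra.
Qed.

Lemma normk_Mop_le_of_unit (X : (V -> C) -> Prop) k psi L :
  (forall f, X f -> Lk o par k f) -> (forall f, X f -> X (Mop psi f)) ->
  (forall r f, X f -> X (Mop (fun _ => RtoC r) f)) ->
  (forall f, X f -> Rbar_le (normk o par k f) (Finite 1) ->
             Rbar_le (normk o par k (Mop psi f)) (Finite L)) ->
  forall f, X f -> Rbar_le (normk o par k (Mop psi f)) (Rbar_mult L (normk o par k f)).
Proof.
  intros HLk Hcl Hscale Hunit f Hf.
  pose proof (HLk f Hf) as Hf'. rewrite (normk_Lk k f Hf').
  set (t := Cmod (f o) + wnorm k f).
  assert (Ht : 0 <= t) by (pose proof (wnorm_nonneg k f Hf'); pose proof (Cmod_ge_0 (f o)); unfold t; lra).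
  destruct (Req_dec t 0) as [Ht0|Ht0].
  - assert (Hzero : Mop psi f = fun _ => RtoC 0).
    { apply functional_extensionality. intros w.
      assert (Hfw : Cmod (f w) <= 0).
      { rewrite <- (Rmult_0_r (1 + harm k (dep w))).
        apply (Cmod_le_normk k f 0 w Hf').
        rewrite (normk_Lk k f Hf'). fold t. rewrite Ht0. apply Rle_refl. }
      unfold Mop. rewrite (Cmod_eq_0 (f w)) by (pose proof (Cmod_ge_0 (f w)); lra). ring. }
    rewrite Hzero, normk_const, Cmod_0, Ht0. simpl. lra.
  - set (h := Mop (fun _ => RtoC (/ t)) f).
    assert (Hth : 0 <= / t) by (apply Rlt_le, Rinv_0_lt_compat; lra).
    assert (Hnh : normk o par k h = Finite 1).
    { unfold h. rewrite normk_scale, normk_Lk by auto. simpl. fold t. f_equal. field. exact Ht0. }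
    assert (Hmh : Mop psi h = Mop (fun _ => RtoC (/ t)) (Mop psi f))
      by (apply functional_extensionality; intros v; unfold h, Mop; ring).
    specialize (Hunit h (Hscale _ _ Hf) ltac:(rewrite Hnh; simpl; lra)).
    rewrite Hmh, normk_scale, normk_Lk in Hunit by auto. rewrite normk_Lk by auto.
    simpl in *. apply (Rmult_le_compat_l t) in Hunit; [|exact Ht].
    replace (t * (/ t * (Cmod (Mop psi f o) + wnorm k (Mop psi f))))
      with (Cmod (Mop psi f o) + wnorm k (Mop psi f)) in Hunit by (field; exact Ht0).
    lra.
Qed.

End Tree.

Section Multiplier.
Context {V : Type} (o : V) (par : V -> V) (HT : rooted_tree o par).
Local Notation dep := (depth o par).
Variables (k : nat) (psi : V -> C) (a b : R).
Hypothesis psi_le : forall v, Cmod (psi v) <= a.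
Hypothesis wD_psi_le : forall v, v <> o -> wD o par (S (S k)) psi v <= b.

Lemma wD_Mop_bound f v : Lk o par (S k) f -> v <> o ->
  wD o par (S k) (Mop psi f) v
  <= a * wnorm o par (S k) f + b * (Cmod (f o) + wnorm o par (S k) f).
Proof.
  intros Hf Hv.
  pose proof (wD_Mop_le o par (S k) psi f v).
  set (s := wnorm o par (S k) f) in *.
  assert (Cmod (psi v) * wD o par (S k) f v <= a * s).
  { apply Rmult_le_compat; auto using Cmod_ge_0, wD_nonneg, wD_le_wnorm. }
  assert (wD o par (S k) psi v * Cmod (f (par v)) <= b * (Cmod (f o) + s)).
  { pose proof (wD_psi_le v Hv) as Hpsi. rewrite wD_S in Hpsi.
    pose proof (wnorm_nonneg o par HT (S k) f Hf). pose proof (Cmod_ge_0 (f o)).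
    apply Rle_trans with (wD o par (S k) psi v * ((Cmod (f o) + s) * ell (S k) (INR (dep v)))).
    - apply Rmult_le_compat_l; [apply wD_nonneg | apply Cmod_par_le_ell; assumption].
    - replace (wD o par (S k) psi v * ((Cmod (f o) + s) * ell (S k) (INR (dep v))))
        with ((Cmod (f o) + s) * (wD o par (S k) psi v * ell (S k) (INR (dep v)))) by ring.
      rewrite (Rmult_comm b). apply Rmult_le_compat_l; [unfold s; lra | exact Hpsi]. }
  lra.
Qed.

Lemma Lk_Mop f : Lk o par (S k) f -> Lk o par (S k) (Mop psi f).
Proof. intros Hf. eexists. intros v Hv. apply wD_Mop_bound; assumption. Qed.

Lemma normk_Mop_le f : Lk o par (S k) f ->
  Rbar_le (normk o par (S k) (Mop psi f)) (Rbar_mult (a + b) (normk o par (S k) f)).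
Proof.
  intros Hf. rewrite !normk_Lk by auto using Lk_Mop. simpl.
  pose proof (wnorm_le o par HT (S k) (Mop psi f) _ (fun v Hv => wD_Mop_bound f v Hf Hv)).
  unfold Mop at 1. rewrite Cmod_mult.
  pose proof (psi_le o). pose proof (Cmod_ge_0 (f o)). nra.
Qed.

Lemma Lk0_Mop f : Lk0 o par (S k) f -> Lk0 o par (S k) (Mop psi f).
Proof.
  intros Hf. split; [apply Lk_Mop, Hf|]. intros eps Heps.
  assert (Ha0 : 0 <= a) by (pose proof (psi_le o); pose proof (Cmod_ge_0 (psi o)); lra).
  assert (Hb0 : 0 <= b).
  { destruct (nonroot_exists o par HT) as [w Hw].
    pose proof (wD_psi_le w Hw). pose proof (wD_nonneg o par (S (S k)) psi w). lra. }
  set (e := eps / (2 * (a + b + 1))).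
  assert (Hae : (a + b) * e < eps / 2) by (unfold e; apply (Rmult_lt_reg_r (2 * (a + b + 1))); [lra|]; field_simplify; nra).
  destruct (Lk0_tail o par HT k f e Hf) as [N [A [HA0 HN]]]; [unfold e; apply Rdiv_lt_0_compat; lra|].
  destruct (ell_unbounded k (2 * (A * b + 1) / eps)) as [N2 HN2].
  exists (Nat.max (S N) N2). intros v Hv Hd.
  rewrite Rabs_pos_eq by apply wD_nonneg.
  destruct (HN v Hv ltac:(lia)) as [Hwf Hfp].
  specialize (HN2 (dep v) ltac:(lia)).
  set (L := ell (S k) (INR (dep v))) in *.
  assert (HL : 1 <= L) by (apply ell_ge1, (depth_ge1 o par HT v Hv)).
  pose proof (wD_psi_le v Hv) as Hpsi. rewrite wD_S in Hpsi. fold L in Hpsi.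
  set (W := wD o par (S k) psi v) in *.
  assert (HW : 0 <= W) by apply wD_nonneg.
  (* The extra factor [L] in the bound [wD_psi_le] is what absorbs the constant [A]. *)
  assert (HWA : W * A < eps / 2).
  { assert (b * A < eps / 2 * L).
    { apply (Rmult_le_compat_l eps) in HN2; [|lra].
      replace (eps * (2 * (A * b + 1) / eps)) with (2 * (A * b + 1)) in HN2 by (field; lra). nra. }
    apply (Rmult_lt_reg_r L); [lra|]. nra. }
  assert (He0 : 0 <= e) by (unfold e; apply Rlt_le, Rdiv_lt_0_compat; lra).
  assert (Cmod (psi v) * wD o par (S k) f v <= a * e)
    by (apply Rmult_le_compat; auto using Cmod_ge_0, wD_nonneg).
  assert (W * Cmod (f (par v)) <= W * (A + e * L)) by (apply Rmult_le_compat_l; assumption).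
  assert (e * (W * L) <= e * b) by (apply Rmult_le_compat_l; assumption).
  pose proof (wD_Mop_le o par (S k) psi f v) as Hprod. fold W in Hprod.
  lra.
Qed.

End Multiplier.

Lemma Lk0_scale {V : Type} (o : V) (par : V -> V) (HT : rooted_tree o par) k r f :
  Lk0 o par (S k) f -> Lk0 o par (S k) (Mop (fun _ => RtoC r) f).
Proof.
  apply (Lk0_Mop o par HT k _ (Rabs r) 0).
  - intros v. rewrite Cmod_R. apply Rle_refl.
  - intros v _. rewrite wD_const. apply Rle_refl.
Qed.

Lemma multiplier_bounded_sufficient {V : Type} (o : V) (par : V -> V) (HT : rooted_tree o par)
  k psi : Linf psi -> Lk o par (S (S k)) psi ->
  bounded_on (Lk o par (S k)) (normk o par (S k)) psi /\
  bounded_on (Lk0 o par (S k)) (normk o par (S k)) psi.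
Proof.
  intros HI HL. destruct (supnorm_Linf psi o HI) as [_ Ha].
  pose proof (fun v Hv => wD_le_wnorm o par HT _ psi v HL Hv) as Hb.
  assert (Hab : 0 <= real (supnorm psi) + wnorm o par (S (S k)) psi).
  { pose proof (Ha o). pose proof (Cmod_ge_0 (psi o)). pose proof (wnorm_nonneg o par HT _ _ HL). lra. }
  split; split.
  - intros f. apply (Lk_Mop o par HT k psi _ _ Ha Hb).
  - exists (real (supnorm psi) + wnorm o par (S (S k)) psi). split; [exact Hab|].
    intros f. apply (normk_Mop_le o par HT k psi _ _ Ha Hb).
  - intros f. apply (Lk0_Mop o par HT k psi _ _ Ha Hb).
  - exists (real (supnorm psi) + wnorm o par (S (S k)) psi). split; [exact Hab|].
    intros f [Hf _]. apply (normk_Mop_le o par HT k psi _ _ Ha Hb f Hf).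
Qed.

Section Necessity.
Context {V : Type} (o : V) (par : V -> V) (HT : rooted_tree o par).
Local Notation dep := (depth o par).

(* |psi w|^n = |(psi^n) w| <= (1 + harm k (dep w)) L^n for all [n]. *)
Lemma Cmod_le_of_bounded (X : (V -> C) -> Prop) k psi L :
  X (fun _ => RtoC 1) -> (forall f, X f -> Lk o par k f) -> (forall f, X f -> X (Mop psi f)) ->
  0 <= L ->
  (forall f, X f -> Rbar_le (normk o par k (Mop psi f)) (Rbar_mult L (normk o par k f))) ->
  forall w, Cmod (psi w) <= L.
Proof.
  intros H1 HLk Hcl HL Hb w.
  set (pw n := Nat.iter n (Mop psi) (fun _ => RtoC 1)).
  assert (HX : forall n, X (pw n)) by (induction n; [exact H1 | apply Hcl; assumption]).
  assert (Hnorm : forall n, Rbar_le (normk o par k (pw n)) (Finite (L ^ n))).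
  { induction n as [|n IH].
    - simpl. rewrite normk_const, Cmod_1 by exact HT. simpl. lra.
    - eapply Rbar_le_trans; [apply (Hb _ (HX n))|].
      rewrite normk_Lk in IH |- * by auto. simpl in *. apply Rmult_le_compat_l; assumption. }
  assert (Hpow : forall n, Cmod (pw n w) = Cmod (psi w) ^ n).
  { induction n as [|n IH]; [apply Cmod_1|].
    simpl. unfold Mop at 1. rewrite Cmod_mult. fold (pw n). rewrite IH. reflexivity. }
  apply (le_of_pow_le _ _ (1 + harm k (dep w))); [apply Cmod_ge_0 | exact HL |].
  intros n. rewrite <- Hpow. apply Cmod_le_normk; auto.
Qed.

(* Up to depth [N], [harm_trunc (S k) N] has the largest growth, [ell (S k)], allowed in
   [Lk o par (S k)] ([Cmod_le_wnorm], [ell_le_harm_trunc_par]). *)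
Definition harm_trunc (k N : nat) : V -> C :=
  fun v => RtoC (1 + harm k (Nat.min (dep v) N)).

Lemma wD_harm_trunc k N v :
  v <> o -> wD o par k (harm_trunc k N) v = if (dep v <=? N)%nat then 1 else 0.
Proof.
  intros Hv. unfold wD, Dop, harm_trunc. rewrite (depth_par o par HT v Hv).
  rewrite <- RtoC_minus, Cmod_R.
  destruct (Nat.leb_spec (S (dep (par v))) N) as [Hle|Hgt].
  - rewrite !Nat.min_l by lia. rewrite harm_S.
    pose proof (harm_step_pos k (dep (par v))) as Hpos.
    replace (1 + (harm k (dep (par v)) + _) - (1 + harm k (dep (par v)))) with
      (/ (INR (S (dep (par v))) * prodl 0 k (INR (S (dep (par v)))))) by ring.
    rewrite Rabs_pos_eq by lra.
    pose proof (INR_S_ge1 (dep (par v))). pose proof (prodl_ge1 0 k _ (INR_S_ge1 (dep (par v)))).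
    field. split; lra.
  - rewrite !Nat.min_r by lia. rewrite Rminus_diag, Rabs_R0. ring.
Qed.

Lemma Lk_harm_trunc k N : Lk o par k (harm_trunc k N).
Proof.
  exists 1. intros v Hv. rewrite wD_harm_trunc by exact Hv.
  destruct (dep v <=? N)%nat; lra.
Qed.

Lemma Lk0_harm_trunc k N : Lk0 o par k (harm_trunc k N).
Proof.
  split; [apply Lk_harm_trunc|]. intros eps Heps. exists (S N). intros v Hv Hd.
  rewrite wD_harm_trunc by exact Hv.
  destruct (Nat.leb_spec (dep v) N); [lia|]. rewrite Rabs_R0. exact Heps.
Qed.

Lemma normk_harm_trunc k N : Rbar_le (normk o par k (harm_trunc k N)) (Finite 2).
Proof.
  rewrite normk_Lk by (exact HT || apply Lk_harm_trunc).
  assert (wnorm o par k (harm_trunc k N) <= 1).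
  { apply wnorm_le; [exact HT|]. intros v Hv. rewrite wD_harm_trunc by exact Hv.
    destruct (dep v <=? N)%nat; lra. }
  assert (Cmod (harm_trunc k N o) = 1).
  { unfold harm_trunc. rewrite depth_o by exact HT. simpl harm. rewrite Rplus_0_r. apply Cmod_1. }
  simpl. lra.
Qed.

Lemma ell_le_harm_trunc_par k N v : v <> o -> (dep v <= N)%nat ->
  ell (S k) (INR (dep v)) <= Cmod (harm_trunc (S k) N (par v)).
Proof.
  intros Hv Hd. unfold harm_trunc. rewrite (depth_par o par HT v Hv) in *.
  rewrite Nat.min_l by lia. pose proof (harm_nonneg (S k) (dep (par v))).
  rewrite Cmod_R, Rabs_pos_eq by lra. apply ell_S_le_harm.
Qed.

Lemma multiplier_bounded_necessary (X : (V -> C) -> Prop) k psi :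
  X (fun _ => RtoC 1) -> (forall N, X (harm_trunc (S k) N)) ->
  (forall f, X f -> Lk o par (S k) f) ->
  bounded_on X (normk o par (S k)) psi -> Linf psi /\ Lk o par (S (S k)) psi.
Proof.
  intros H1 Htrunc HLk [Hcl [C [HC Hb]]].
  pose proof (Cmod_le_of_bounded X (S k) psi C H1 HLk Hcl HC Hb) as Hpsi.
  split; [exists C; exact Hpsi|]. exists (3 * C). intros v Hv.
  set (g := harm_trunc (S k) (dep v)).
  assert (Hg : wD o par (S k) g v = 1)
    by (unfold g; rewrite wD_harm_trunc, Nat.leb_refl by exact Hv; reflexivity).
  assert (Hpg : wD o par (S k) (Mop psi g) v <= 2 * C).
  { apply (wD_le_normk o par HT); [apply HLk, Hcl, Htrunc | exact Hv |].
    eapply Rbar_le_trans; [apply Hb, Htrunc|].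
    pose proof (normk_harm_trunc (S k) (dep v)) as Hg2. fold g in Hg2.
    rewrite normk_Lk in Hg2 |- * by (exact HT || apply Lk_harm_trunc). simpl in *.
    rewrite Rmult_comm. apply Rmult_le_compat_r; assumption. }
  pose proof (ell_le_harm_trunc_par k (dep v) v Hv (le_n _)) as Hell. fold g in Hell.
  pose proof (wD_Mop_ge o par (S k) psi g v) as Hprod.
  pose proof (wD_nonneg o par (S k) psi v). pose proof (Hpsi v).
  rewrite wD_S.
  assert (wD o par (S k) psi v * ell (S k) (INR (dep v)) <= wD o par (S k) psi v * Cmod (g (par v)))
    by (apply Rmult_le_compat_l; assumption).
  rewrite Hg in Hprod. lra.
Qed.

End Necessity.

Section OperatorNorm.
Context {V : Type} (o : V) (par : V -> V) (HT : rooted_tree o par).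
Variables (X : (V -> C) -> Prop) (k : nat) (psi : V -> C).
Hypothesis X_one : X (fun _ => RtoC 1).
Hypothesis X_Lk : forall f, X f -> Lk o par (S k) f.
Hypothesis X_scale : forall r f, X f -> X (Mop (fun _ => RtoC r) f).
Hypothesis X_Mop : forall f, X f -> X (Mop psi f).
Hypothesis psi_Linf : Linf psi.
Hypothesis psi_Lk : Lk o par (S (S k)) psi.

Lemma normk_Mop_finite f : X f ->
  normk o par (S k) (Mop psi f) = Finite (real (normk o par (S k) (Mop psi f))).
Proof. intros Hf. rewrite (normk_Lk o par HT _ _ (X_Lk _ (X_Mop f Hf))). reflexivity. Qed.

Lemma Mop_one : Mop psi (fun _ => RtoC 1) = psi.
Proof. apply functional_extensionality. intros v. unfold Mop. ring. Qed.

Lemma psi_Lk_S : Lk o par (S k) psi.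
Proof. rewrite <- Mop_one. apply X_Lk, X_Mop, X_one. Qed.

Lemma normk_le_opnorm :
  Rbar_le (normk o par (S k) psi) (opnorm X (normk o par (S k)) psi).
Proof.
  rewrite <- Mop_one at 1. rewrite normk_Mop_finite by exact X_one. apply Lub_Rbar_ub.
  exists (fun _ => RtoC 1). split; [exact X_one|]. split.
  - rewrite normk_const, Cmod_1 by exact HT. apply Rle_refl.
  - symmetry. apply normk_Mop_finite, X_one.
Qed.

Lemma supnorm_le_opnorm : Rbar_le (supnorm psi) (opnorm X (normk o par (S k)) psi).
Proof.
  pose proof normk_le_opnorm as Hlow.
  apply Lub_Rbar_least. intros x [w ->].
  destruct (opnorm X (normk o par (S k)) psi) as [L| |] eqn:HO; [| exact I |].
  - assert (HL0 : 0 <= L).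
    { rewrite (normk_Lk o par HT _ _ psi_Lk_S) in Hlow. simpl in Hlow.
      pose proof (wnorm_nonneg o par HT _ _ psi_Lk_S). pose proof (Cmod_ge_0 (psi o)). lra. }
    apply (Cmod_le_of_bounded o par HT X (S k) psi L X_one X_Lk X_Mop HL0).
    apply (normk_Mop_le_of_unit o par HT); auto.
    intros f Hf Hf1. rewrite <- HO, normk_Mop_finite by exact Hf.
    apply Lub_Rbar_ub. exists f. split; [exact Hf|]. split; [exact Hf1|]. symmetry. apply normk_Mop_finite, Hf.
  - rewrite (normk_Lk o par HT _ _ psi_Lk_S) in Hlow. exact Hlow.
Qed.

Lemma opnorm_le :
  Rbar_le (opnorm X (normk o par (S k)) psi) (Rbar_plus (supnorm psi) (upper_sup o par (S k) psi)).
Proof.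
  destruct (supnorm_Linf psi o psi_Linf) as [Hsup Hpsi_le].
  rewrite Hsup, upper_sup_wsup, (wsup_Lk o par HT _ _ psi_Lk). simpl.
  apply Lub_Rbar_least. intros x [f [Hf [Hf1 Hx]]].
  pose proof (normk_Mop_le o par HT k psi _ _ Hpsi_le
                (fun v Hv => wD_le_wnorm o par HT _ psi v psi_Lk Hv) f (X_Lk f Hf)) as Hb.
  rewrite <- Hx, (normk_Lk o par HT _ _ (X_Lk f Hf)) in Hb.
  rewrite (normk_Lk o par HT _ _ (X_Lk f Hf)) in Hf1. simpl in *.
  pose proof (Hpsi_le o). pose proof (Cmod_ge_0 (psi o)).
  pose proof (wnorm_nonneg o par HT _ _ psi_Lk).
  pose proof (wnorm_nonneg o par HT _ _ (X_Lk f Hf)). pose proof (Cmod_ge_0 (f o)).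
  nra.
Qed.

Lemma opnorm_estimate_of : opnorm_estimate o par X (S k) psi.
Proof. split; [|split]; auto using supnorm_le_opnorm, normk_le_opnorm, opnorm_le. Qed.

End OperatorNorm.

Theorem theorem3p1 (V : Type) (o : V) (par : V -> V) (HT : rooted_tree o par)
  (k : nat) (Hk : (1 <= k)%nat) (psi : V -> C) :
  (bounded_on (Lk o par k) (normk o par k) psi <->
     bounded_on (Lk0 o par k) (normk o par k) psi) /\
  (bounded_on (Lk0 o par k) (normk o par k) psi <->
     (Linf psi /\ Lk o par (S k) psi)) /\
  ((Linf psi /\ Lk o par (S k) psi) ->
     opnorm_estimate o par (Lk o par k) k psi /\
     opnorm_estimate o par (Lk0 o par k) k psi).
Proof.
  destruct k as [|k]; [lia|].
  pose proof (multiplier_bounded_sufficient o par HT k psi) as Hsuff.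
  assert (Hnec : bounded_on (Lk o par (S k)) (normk o par (S k)) psi ->
                 Linf psi /\ Lk o par (S (S k)) psi).
  { apply (multiplier_bounded_necessary o par HT); auto using Lk_const, Lk_harm_trunc. }
  assert (Hnec0 : bounded_on (Lk0 o par (S k)) (normk o par (S k)) psi ->
                  Linf psi /\ Lk o par (S (S k)) psi).
  { apply (multiplier_bounded_necessary o par HT); auto using Lk0_const, Lk0_harm_trunc.
    intros f [Hf _]. exact Hf. }
  split; [|split].
  - split; intros H.
    + destruct (Hnec H) as [HI HL]. exact (proj2 (Hsuff HI HL)).
    + destruct (Hnec0 H) as [HI HL]. exact (proj1 (Hsuff HI HL)).
  - split; [exact Hnec0 | intros [HI HL]; exact (proj2 (Hsuff HI HL))].
  - intros [HI HL]. destruct (Hsuff HI HL) as [[HMop _] [HMop0 _]].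
    split; apply (opnorm_estimate_of o par HT); auto using Lk_const, Lk0_const, Lk_scale, Lk0_scale.
    intros f [Hf _]. exact Hf.
Qed.
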